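(* There is a universal constant $C>0$ such that for every domain $\mathcal{X}$, every $n\ge1$, every $\varepsilon>0$, every pair of distributions $P,Q$ on $\mathcal{X}$, and every $\varepsilon$-differentially private algorithm $M:\mathcal{X}^n\to\{P,Q\}$, $$\left|\Pr_{X\sim P^n}[M(X)=P]-\Pr_{X\sim Q^n}[M(X)=P]\right|\le C\cdot W_{d_{\varepsilon}}(P,Q).$$
   Context: Data sets $X,Y\in\mathcal{X}^n$ are neighbors if they differ in at most one entry; a randomized $M$ is $\varepsilon$-differentially private if $\Pr[M(X)\in S]\le e^{\varepsilon}\Pr[M(Y)\in S]$ for all neighbors $X,Y$ and all events $S$. $d_H(X,Y)=|\{i:x_i\ne y_i\}|$ is Hamming distance and $d_{\varepsilon}(X,Y)=\min\{\varepsilon d_H(X,Y),1\}$. For a metric $d$ on $\mathcal{X}^n$, $W_d(P,Q)=\inf_\rho\mathbb{E}_{(X,Y)\sim\rho}[d(X,Y)]$, the infimum over all couplings $\rho$ of $P^n$ and $Q^n$. Probabilities are over the samples and the randomness of $M$. *)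

From HB Require Import structures.
From mathcomp Require Import all_boot all_order all_algebra.
From mathcomp Require Import all_classical all_reals all_analysis.
Set Implicit Arguments. Unset Strict Implicit. Unset Printing Implicit Defensive.
Import Order.TTheory GRing.Theory Num.Theory.
Local Open Scope classical_set_scope.
Local Open Scope ring_scope.

Definition hamming {T : Type} {n : nat} (x y : n.-tuple T) : nat :=
  (\sum_(i < n) `[< tnth x i <> tnth y i >])%N.

Definition neighbors {T : Type} {n : nat} (x y : n.-tuple T) : Prop :=
  (hamming x y <= 1)%N.

Definition d_eps {R : realType} {T : Type} {n : nat} (eps : R)
  (x y : n.-tuple T) : R :=
  Num.min (eps * (hamming x y)%:R) 1.

(* A randomized algorithm M : X^n -> {P, Q} is a probability kernel from
   X^n to bool, the output [true] standing for "P" and [false] for "Q". *)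
Definition eps_DP {R : realType} {d : measure_display} {X : measurableType d}
  {n : nat} (eps : R) (M : R.-pker (n.-tuple X) ~> bool) : Prop :=
  forall (x y : n.-tuple X), neighbors x y ->
  forall S : set bool, (M x S <= (expR eps)%:E * M y S)%E.

Definition is_product_measure {R : realType} {d : measure_display}
  {X : measurableType d} {n : nat} (P : probability X R)
  (Pn : probability (n.-tuple X) R) : Prop :=
  forall A : 'I_n -> set X, (forall i, measurable (A i)) ->
  Pn [set x | forall i, A i (tnth x i)] = (\prod_(i < n) P (A i))%E.

Definition is_coupling {R : realType} {d : measure_display}
  {X : measurableType d} {n : nat} (Pn Qn : probability (n.-tuple X) R)
  (rho : probability (n.-tuple X * n.-tuple X)%type R) : Prop :=
  (forall A, measurable A -> rho (A `*` setT) = Pn A) /\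
  (forall B, measurable B -> rho (setT `*` B) = Qn B).

Definition wasserstein_deps {R : realType} {d : measure_display}
  {X : measurableType d} {n : nat} (eps : R)
  (Pn Qn : probability (n.-tuple X) R) : \bar R :=
  ereal_inf [set (\int[rho]_z (d_eps eps z.1 z.2)%:E)%E
            | rho in [set rho | is_coupling Pn Qn rho]].

From HB Require Import structures.
From mathcomp Require Import all_boot all_order all_algebra.
From mathcomp Require Import all_classical all_reals all_analysis.
From mathcomp Require Import lra measurable_realfun.
Import Order.TTheory GRing.Theory Num.Theory.
Local Open Scope classical_set_scope.
Local Open Scope ring_scope.

(* The acceptance probability f x := Pr[M(x) = P] satisfies f x <= e^eps f y
   on neighbors, hence f x <= e^(eps d_H(x,y)) f y by group privacy, and since
   f takes values in [0,1] this forces |f x - f y| <= min(eps d_H(x,y), 1),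
   i.e. f is 1-Lipschitz for d_eps.  For any coupling rho of P^n and Q^n,
   |E_{P^n} f - E_{Q^n} f| = |E_rho (f X - f Y)| <= E_rho d_eps(X, Y), and the
   infimum over rho gives the claim with C = 1. *)

Lemma subr_le_of_le_expR (R : realType) (a b t : R) :
  0 <= a <= 1 -> 0 <= t -> a <= expR t * b -> a - b <= t.
Proof.
move=> /andP[a0 a1] t0 ab.
have eNt_ab : expR (- t) * a <= b.
  by rewrite expRN ler_pdivrMl ?expR_gt0.
have := expR_ge1Dx (- t); nra.
Qed.

Lemma ler_dist_min_expR (R : realType) (a b t : R) :
  0 <= a <= 1 -> 0 <= b <= 1 -> 0 <= t ->
  a <= expR t * b -> b <= expR t * a -> `|a - b| <= Num.min t 1.
Proof.
move=> a01 b01 t0 ab ba; rewrite le_min; apply/andP; split.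
  rewrite ler_norml lerNl opprB.
  by apply/andP; split; apply: subr_le_of_le_expR.
move: a01 b01 => /andP[? ?] /andP[? ?]; rewrite ler_norml; apply/andP; split; lra.
Qed.

Section Hamming.
Context {T : Type} {n : nat}.
Implicit Types x y : n.-tuple T.

Lemma hammingC x y : hamming x y = hamming y x.
Proof.
apply: eq_bigr => i _; congr nat_of_bool.
by apply/asbool_equiv_eq; split => neq eq; apply: neq.
Qed.

Lemma hamming_eq0 x y : hamming x y = 0%N -> x = y.
Proof.
move=> h0; apply: eq_from_tnth => i; apply: contrapT => neq.
by move: h0; rewrite /hamming (bigD1 i) //= asboolT.
Qed.

Lemma hamming_neighbor_step x y k :
  hamming x y = k.+1 -> exists2 z, neighbors x z & hamming z y = k.
Proof.
move=> hk.
have [i neq] : exists i, tnth x i <> tnth y i.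
  apply: contrapT => all_eq; move: hk; rewrite /hamming big1 // => j _.
  by rewrite asboolF // => neq; apply: all_eq; exists j.
pose z := [tuple if j == i then tnth y j else tnth x j | j < n].
have tnth_z j : tnth z j = if j == i then tnth y j else tnth x j.
  exact: tnth_mktuple.
exists z.
  rewrite /neighbors /hamming (bigD1 i) //= big1 ?addn0 ?leq_b1 // => j ji.
  by rewrite asboolF // tnth_z (negbTE ji).
move: hk; rewrite /hamming (bigD1 i) //= asboolT // add1n => -[<-].
rewrite (bigD1 i) //= tnth_z eqxx asboolF // add0n.
by apply: eq_bigr => j ji; rewrite tnth_z (negbTE ji).
Qed.

End Hamming.

Section GroupPrivacy.
Context {R : realType} {T : Type} {n : nat} {eps : R} {f : n.-tuple T -> R}.
Hypothesis f_dp : forall x y, neighbors x y -> f x <= expR eps * f y.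

Lemma group_privacy x y : f x <= expR (eps * (hamming x y)%:R) * f y.
Proof.
suff privacy_at k : forall x y, hamming x y = k -> f x <= expR (eps * k%:R) * f y.
  exact: privacy_at.
elim: k => [|k IH] {}x {}y; first by move/hamming_eq0 => ->; rewrite mulr0 expR0 mul1r.
move/hamming_neighbor_step => [z xz zy].
apply: le_trans (f_dp _ _ xz) _.
rewrite mulrSr mulrDr mulr1 expRD (mulrC (expR (eps * _))) -mulrA.
by apply: ler_wpM2l; [exact: expR_ge0 | exact: IH].
Qed.

Hypotheses (eps_ge0 : 0 <= eps) (f_ge0 : forall x, 0 <= f x) (f_le1 : forall x, f x <= 1).

Lemma dist_le_d_eps x y : `|f x - f y| <= d_eps eps x y.
Proof.
have f01 z : 0 <= f z <= 1 by rewrite f_ge0 f_le1.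
apply: ler_dist_min_expR => //; first by rewrite mulr_ge0.
  exact: group_privacy.
by rewrite hammingC group_privacy.
Qed.

End GroupPrivacy.

Lemma measurable_d_eps (R : realType) (d : measure_display)
    (X : measurableType d) (n : nat) (eps : R) :
  measurable [set z : X * X | z.1 = z.2] ->
  measurable_fun [set: n.-tuple X * n.-tuple X] (fun z => d_eps eps z.1 z.2).
Proof.
move=> mdiag.
pose A (i : 'I_n) := [set z : n.-tuple X * n.-tuple X | tnth z.1 i <> tnth z.2 i].
have mA i : measurable (A i).
  have mtnth2 : measurable_fun [set: n.-tuple X * n.-tuple X]
      (fun z => (tnth z.1 i, tnth z.2 i)).
    by apply: measurable_fun_pair; apply: measurableT_comp (measurable_tnth i) _.
  by have := mtnth2 measurableT _ (measurableC mdiag); rewrite setTI.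
have -> : (fun z : n.-tuple X * n.-tuple X => d_eps eps z.1 z.2) =
    (fun z => Num.min (eps * \sum_(i <- enum 'I_n) \1_(A i) z) 1).
  apply: funext => z; rewrite /d_eps /hamming natr_sum big_enum /=.
  by congr (Num.min (eps * _) 1); apply: eq_bigr => i _; rewrite indicE.
apply: measurable_minr; last exact: measurable_cst.
apply: measurable_funM; first exact: measurable_cst.
by apply: measurable_sum => i; exact: measurable_indic.
Qed.

Section Coupling.
Context {d} {T : measurableType d} {R : realType}.
Context {mu nu : probability T R} {rho : probability (T * T)%type R}.
Hypothesis rho_fst : forall A, measurable A -> rho (A `*` setT) = mu A.
Hypothesis rho_snd : forall B, measurable B -> rho (setT `*` B) = nu B.
Local Open Scope ereal_scope.

Lemma ge0_integral_coupling_fst (f : T -> \bar R) :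
  measurable_fun setT f -> (forall x, 0 <= f x) ->
  \int[mu]_x f x = \int[rho]_z f z.1.
Proof.
move=> mf f0; rewrite (eq_measure_integral (pushforward rho fst)); last first.
  move=> A mA _; rewrite /pushforward; transitivity (rho (A `*` setT)).
    by rewrite rho_fst.
  congr (rho _).
  by apply/seteqP; split => [z [] | z Az].
by rewrite ge0_integral_pushforward // preimage_setT.
Qed.

Lemma ge0_integral_coupling_snd (f : T -> \bar R) :
  measurable_fun setT f -> (forall x, 0 <= f x) ->
  \int[nu]_x f x = \int[rho]_z f z.2.
Proof.
move=> mf f0; rewrite (eq_measure_integral (pushforward rho snd)); last first.
  move=> B mB _; rewrite /pushforward; transitivity (rho (setT `*` B)).
    by rewrite rho_snd.
  congr (rho _).
  by apply/seteqP; split => [z [] | z Bz].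
by rewrite ge0_integral_pushforward // preimage_setT.
Qed.

Lemma coupling_abse_integralB_le (f : T -> R) (c : T * T -> R) :
  measurable_fun setT f -> (forall x, 0 <= f x <= 1)%R ->
  measurable_fun setT c -> (forall x y, `|f x - f y| <= c (x, y))%R ->
  `|\int[mu]_x (f x)%:E - \int[nu]_x (f x)%:E| <= \int[rho]_z (c z)%:E.
Proof.
move=> mf f01 mc fc.
have mEf : measurable_fun setT (EFin \o f) by exact/measurable_EFinP.
have f0 x : 0 <= (f x)%:E by rewrite lee_fin; case/andP: (f01 x).
have mEf1 : measurable_fun setT (fun z : T * T => (f z.1)%:E).
  exact: measurableT_comp mEf measurable_fst.
have mEf2 : measurable_fun setT (fun z : T * T => (f z.2)%:E).
  exact: measurableT_comp mEf measurable_snd.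
have integrable_bounded (g : T * T -> \bar R) : measurable_fun setT g ->
    (forall z, 0 <= g z <= 1) -> rho.-integrable setT g.
  move=> mg g01.
  have int1 := finite_measure_integrable_cst rho 1%R measurableT.
  apply: (le_integrable measurableT mg _ int1) => z _.
  by case/andP: (g01 z) => g0 g1; rewrite gee0_abs //= normr1.
rewrite (ge0_integral_coupling_fst (EFin \o f)) //.
rewrite (ge0_integral_coupling_snd (EFin \o f)) //.
have int_f1 : rho.-integrable setT (EFin \o (fun z : T * T => f z.1)).
  by apply: integrable_bounded => // z; rewrite /= !lee_fin.
have int_f2 : rho.-integrable setT (EFin \o (fun z : T * T => f z.2)).
  by apply: integrable_bounded => // z; rewrite /= !lee_fin.
rewrite -integralB_EFin //.
apply: le_trans (le_abse_integral _ _ _) _ => //; first exact: emeasurable_funB.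
apply: ge0_le_integral => //.
- exact: measurableT_comp (emeasurable_funB mEf1 mEf2).
- exact/measurable_EFinP.
- by move=> [x y] _; rewrite -EFinB /= lee_fin.
Qed.

End Coupling.

Section ProbabilityKernel.
Context {R : realType} {d d'} {X : measurableType d} {Y : measurableType d'}.
Variables (k : R.-pker X ~> Y) (A : set Y).
Hypothesis mA : measurable A.

Lemma prob_kernel_le1 x : (k x A <= 1)%E.
Proof. by rewrite -(@prob_kernel _ _ _ _ _ k x); apply: le_measure; rewrite ?inE. Qed.

Lemma prob_kernel_fineK x : k x A = (fine (k x A))%:E.
Proof.
by rewrite fineK // ge0_fin_numE // (le_lt_trans (prob_kernel_le1 x)) // ltey.
Qed.

Lemma prob_kernel_fine01 x : 0 <= fine (k x A) <= 1.
Proof. by rewrite -!lee_fin -prob_kernel_fineK measure_ge0 prob_kernel_le1. Qed.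

End ProbabilityKernel.

Theorem lemma3p2 (R : realType) :
  exists C : R, 0 < C /\
  forall (d : measure_display) (X : measurableType d),
  measurable [set z : X * X | z.1 = z.2] ->
  forall (n : nat), (1 <= n)%N ->
  forall (eps : R), 0 < eps ->
  forall (P Q : probability X R)
         (Pn Qn : probability (n.-tuple X) R),
  is_product_measure P Pn -> is_product_measure Q Qn ->
  forall M : R.-pker (n.-tuple X) ~> bool, eps_DP eps M ->
  (`| \int[Pn]_x M x [set true] - \int[Qn]_x M x [set true] |
     <= C%:E * wasserstein_deps eps Pn Qn)%E.
Proof.
exists 1; split => // d X mdiag n _ eps eps0 P Q Pn Qn _ _ M M_dp.
pose f x := fine (M x [set true]).
have Mf : (fun x => M x [set true]) = EFin \o f.
  by apply: funext => x; rewrite prob_kernel_fineK.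
have f01 x : 0 <= f x <= 1 by exact: prob_kernel_fine01.
have mf : measurable_fun setT f.
  by apply/measurable_EFinP; rewrite -Mf; exact: measurable_kernel.
have f_dp x y : neighbors x y -> f x <= expR eps * f y.
  move=> xy; have := M_dp x y xy [set true].
  by rewrite [M x _]prob_kernel_fineK // [M y _]prob_kernel_fineK // -EFinM lee_fin.
rewrite mul1e Mf; apply: le_ereal_inf_tmp => _ [rho [rho_fst rho_snd] <-].
apply: (coupling_abse_integralB_le rho_fst rho_snd f (fun z => d_eps eps z.1 z.2)) => //.
- exact: measurable_d_eps.
- by move=> x y; apply: (dist_le_d_eps f_dp (ltW eps0)) => z; case/andP: (f01 z).
Qed.
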